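(* Let $\mathcal B$ be the countable set of all finite sequences of positive integers. For each $B=(m_1,\dots,m_k)\in\mathcal B$ choose a tensor $\mathcal T^0_B\in\bigotimes_{i=1}^k\mathbb{C}^{m_i}$, in such a way that the collection of all entries of all the $\mathcal T^0_B$ ($B\in\mathcal B$) is algebraically independent over $\mathbb{Q}$. Then for every tensor network template $(G,c)$ with local ordering $L$, the Version II assignment $v\mapsto\mathcal T^0_{B_v}$ yields a map $\beta(G,c,L;\mathcal T^0)$ whose rank equals $\mathrm{QMF}(G,c,L)$.
   Context: A tensor network template $(G,c)$ consists of a finite undirected graph $G$ with edge set $E$ whose vertex set is partitioned as $S\sqcup T\sqcup V$. Every element of $S$ (inputs) and every element of $T$ (outputs) is an open end of degree $1$; the elements of $V$ are called vertices. For $u\in S\sqcup T$, $e(u)$ denotes the edge incident to $u$. A capacity function $c:E\to\mathbb{Z}_{>0}$ is given, and to each edge $e$ one associates $\mathbb{C}^{c_e}$ with a fixed basis. A local ordering $L$ fixes, at each vertex $v$ of degree $d_v$, an ordering $e(v,1),\dots,e(v,d_v)$ of the incident edge-ends. Given a tensor $\mathcal T_v\in\bigotimes_{i=1}^{d_v}\mathbb{C}^{c_{e(v,i)}}$ at each vertex, let $V_S=\bigotimes_{u\in S}\mathbb{C}^{c_{e(u)}}$ and $V_T=\bigotimes_{u\in T}\mathbb{C}^{c_{e(u)}}$. Contracting the network along all edges gives $\beta\in\mathrm{Hom}(V_S,V_T)$, whose matrix entries are $\langle I_T|\beta|I_S\rangle=\sum_W\prod_{v\in V}(\mathcal T_v)_{W|_v}$.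 Here $W$ ranges over all assignments of basis indices to all edges that agree with $I_S$ on input edges and $I_T$ on output edges, and $W|_v$ is the tuple of indices on $e(v,1),\dots,e(v,d_v)$. Version II: the valence type of $v$ is the sequence $B_v=(c_{e(v,1)},\dots,c_{e(v,d_v)})$. A Version II assignment chooses one tensor $\mathcal T_B\in\bigotimes_i\mathbb{C}^{m_i}$ for each valence type $B=(m_1,\dots,m_k)$ occurring, and places $\mathcal T_{B_v}$ at each vertex $v$. The result is denoted $\beta(G,c,L;\mathcal T)$, and $\mathrm{QMF}(G,c,L)$ is its maximal rank over all Version II assignments. *)

From HB Require Import structures.
From mathcomp Require Import all_boot all_order all_algebra.
From Stdlib Require Import ClassicalEpsilon.
Set Implicit Arguments. Unset Strict Implicit. Unset Printing Implicit Defensive.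
Import Order.TTheory GRing.Theory Num.Theory.
Local Open Scope ring_scope.

(* A tensor network template (G, c), presented through half-edges.
   Nodes are S (inputs) + T (outputs) + V (vertices). *)
Record template := Template {
  tS : finType;
  tT : finType;
  tV : finType;
  tE : finType;
  tend : tE -> bool -> (tS + tT + tV)%type;
  tcap : tE -> nat }.
Arguments tend : clear implicits.
Arguments tcap : clear implicits.

Definition valid_template (G : template) : Prop :=
  [/\ forall e, (0 < tcap G e)%N,
      forall u : tS G,
        #|[pred h : tE G * bool | tend G h.1 h.2 == inl (inl u)]| = 1%N &
      forall u : tT G,
        #|[pred h : tE G * bool | tend G h.1 h.2 == inl (inr u)]| = 1%N].

Definition local_ordering (G : template) (L : tV G -> seq (tE G * bool)) : Prop :=
  forall v, uniq (L v) /\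
    forall h : tE G * bool, (h \in L v) = (tend G h.1 h.2 == inr v).

Definition valence (G : template) (L : tV G -> seq (tE G * bool)) (v : tV G)
  : seq nat := [seq tcap G h.1 | h <- L v].

Definition capN (G : template) : nat := (\max_(e : tE G) tcap G e)%N.

(* A Version II assignment is a map Tn : (valence type B) -> tensor T_B, a
   tensor of type B = (m_1..m_k) being given by its entries
   Tn B [:: i_1; ..; i_k] with i_j < m_j (other values are irrelevant). *)

Definition beta_entry (C : numClosedFieldType) (G : template)
  (L : tV G -> seq (tE G * bool)) (Tn : seq nat -> seq nat -> C)
  (IT : {ffun tT G -> 'I_(capN G)}) (IS : {ffun tS G -> 'I_(capN G)}) : C :=
  \sum_(W : {ffun tE G -> 'I_(capN G)} |
          [forall e, (W e < tcap G e)%N] &&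
          [forall h : tE G * bool,
             match tend G h.1 h.2 with
             | inl (inl u) => W h.1 == IS u
             | inl (inr u) => W h.1 == IT u
             | inr _ => true
             end])
    \prod_(v : tV G) Tn (valence L v) [seq val (W h.1) | h <- L v].

(* The matrix of beta(G,c,L;Tn), with rows indexed by output index
   assignments and columns by input index assignments (taking values below
   capN G); rows/columns with out-of-range indices are identically zero, so
   the rank equals the rank of beta : V_S -> V_T. *)
Definition beta_mx (C : numClosedFieldType) (G : template)
  (L : tV G -> seq (tE G * bool)) (Tn : seq nat -> seq nat -> C)
  : 'M[C]_(#|{ffun tT G -> 'I_(capN G)}|, #|{ffun tS G -> 'I_(capN G)}|) :=
  \matrix_(i, j) beta_entry L Tn (enum_val i) (enum_val j).

Definition rank_attained (C : numClosedFieldType) (G : template)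
  (L : tV G -> seq (tE G * bool)) (k : nat) : Prop :=
  exists Tn : seq nat -> seq nat -> C, \rank (beta_mx L Tn) = k.

Definition rank_attainedb (C : numClosedFieldType) (G : template)
  (L : tV G -> seq (tE G * bool)) (k : nat) : bool :=
  if excluded_middle_informative (rank_attained C L k) then true else false.

Lemma rank_attained_ex (C : numClosedFieldType) (G : template)
  (L : tV G -> seq (tE G * bool)) : exists k, rank_attainedb C L k.
Proof.
exists (\rank (beta_mx L (fun _ _ => (0 : C)))); rewrite /rank_attainedb.
case: excluded_middle_informative => // H; exfalso; apply: H.
by exists (fun _ _ => 0).
Qed.

Lemma rank_attained_bnd (C : numClosedFieldType) (G : template)
  (L : tV G -> seq (tE G * bool)) :
  forall k, rank_attainedb C L k -> (k <= #|{ffun tS G -> 'I_(capN G)}|)%N.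
Proof.
move=> k; rewrite /rank_attainedb; case: excluded_middle_informative => // -[Tn Hk] _; rewrite -Hk.
exact: rank_leq_col.
Qed.

Definition QMF (C : numClosedFieldType) (G : template)
  (L : tV G -> seq (tE G * bool)) : nat :=
  ex_maxn (rank_attained_ex C L) (@rank_attained_bnd C G L).

Definition valid_entry (x : seq nat * seq nat) : bool :=
  all (fun m => 0 < m)%N x.1 && all2 (fun i m => i < m)%N x.2 x.1.

(* The entries of all T_B are algebraically independent over Q: no nonzero
   polynomial with rational coefficients (in finitely many variables, each of
   degree < d) vanishes at finitely many distinct entries. *)
Definition alg_indep_entries (C : numClosedFieldType)
  (Tn : seq nat -> seq nat -> C) : Prop :=
  forall (n d : nat) (x : 'I_n -> seq nat * seq nat)
         (p : {ffun {ffun 'I_n -> 'I_d} -> rat}),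
    injective x -> (forall j, valid_entry (x j)) ->
    (exists e, p e != 0) ->
    \sum_(e : {ffun 'I_n -> 'I_d})
       ratr (p e) * \prod_(j < n) (Tn (x j).1 (x j).2) ^+ (e j) != 0.

(* Every β(G,c,L;T) is the specialisation of one matrix A whose entries are
   polynomials over Q in variables standing for the finitely many tensor
   entries that occur in the contraction.  If β(G,c,L;T) has a nonzero r×r
   minor, the corresponding minor of A is a nonzero polynomial; algebraic
   independence of the entries of T⁰ keeps it nonzero at T⁰, so
   rank β(G,c,L;T⁰) ≥ rank β(G,c,L;T) for every T, i.e. T⁰ attains QMF. *)

From HB Require Import structures.
From mathcomp Require Import all_boot all_order all_algebra.
From mathcomp Require Import mpoly.
From Stdlib Require Import ClassicalEpsilon.
Set Implicit Arguments. Unset Strict Implicit. Unset Printing Implicit Defensive.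
Import Order.TTheory GRing.Theory Num.Theory.
Local Open Scope ring_scope.

Lemma mxrank_minor_exists (F : fieldType) m k (A : 'M[F]_(m, k)) :
  exists (f : 'I_(\rank A) -> 'I_m) (g : 'I_(\rank A) -> 'I_k),
    \det (mxsub f g A) != 0.
Proof.
pose f := maxrankfun A; pose A1 := rowsub f A.
have A1full : row_full A1^T by rewrite /row_full mxrank_tr /A1 /f eq_maxrowsub.
pose g := fullrankfun A1full.
exists f, g; have := fullrowsub_unit A1full; rewrite unitmxE unitfE.
have -> : rowsub g A1^T = (mxsub f g A)^T by apply/matrixP => i j; rewrite !mxE.
by rewrite det_tr.
Qed.

Lemma mxrank_ge_minor (F : fieldType) m k r (A : 'M[F]_(m, k))
    (f : 'I_r -> 'I_m) (g : 'I_r -> 'I_k) :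
  \det (mxsub f g A) != 0 -> (r <= \rank A)%N.
Proof.
move=> detA; have : row_free (mxsub f g A).
  by rewrite row_free_unit unitmxE unitfE.
rewrite /row_free => /eqP <-.
have -> : mxsub f g A = rowsub f (colsub g A) by apply/matrixP => i j; rewrite !mxE.
apply: leq_trans (mxrankS (rowsub_sub f _)) _.
rewrite -mxrank_tr -[X in (_ <= X)%N]mxrank_tr.
have -> : (colsub g A)^T = rowsub g A^T by apply/matrixP => i j; rewrite !mxE.
exact: mxrankS (rowsub_sub g _).
Qed.

Lemma mxrank_map_le (R : comNzRingType) (F : fieldType)
    (phi psi : {rmorphism R -> F}) m k (A : 'M[R]_(m, k)) :
  (forall a, psi a = 0 -> phi a = 0) ->
  (\rank (map_mx phi A) <= \rank (map_mx psi A))%N.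
Proof.
move=> psi0_phi0; have [f [g]] := mxrank_minor_exists (map_mx phi A).
rewrite -map_mxsub det_map_mx => det_phi.
apply: (mxrank_ge_minor (f := f) (g := g)); rewrite -map_mxsub det_map_mx.
by apply: contra_neq det_phi; apply: psi0_phi0.
Qed.

Section AlgebraicIndependence.
Variables (C : numClosedFieldType) (T0 : seq nat -> seq nat -> C).
Variables (n : nat) (x : 'I_n -> seq nat * seq nat).
Hypotheses (T0_indep : alg_indep_entries T0) (x_inj : injective x)
  (x_valid : forall j, valid_entry (x j)).

Let eval := mmap (@ratr C) (fun j => T0 (x j).1 (x j).2).

(* The monomials of P all have exponents below d := msize P, so P is one of
   the coefficient families quantified over in [alg_indep_entries]. *)
Lemma alg_indep_eval_eq0 (P : {mpoly rat[n]}) : eval P = 0 -> P = 0.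
Proof.
apply: contra_eq => P_neq0; set d := msize P.
pose mon (e : {ffun 'I_n -> 'I_d}) : 'X_{1..n} := [multinom val (e i) | i < n].
have mon_inj : injective mon.
  move=> e1 e2 /mnmP eq_mon; apply/ffunP => i; apply/val_inj.
  by have := eq_mon i; rewrite !mnmE.
have mon_surj m : m \in msupp P -> {e | mon e = m}.
  move=> m_supp; have m_lt i : (m i < d)%N.
    apply: leq_ltn_trans (msize_mdeg_lt m_supp).
    by rewrite mdegE (bigD1 i) //= leq_addr.
  by exists [ffun i => Ordinal (m_lt i)]; apply/mnmP => i; rewrite mnmE ffunE.
pose p := [ffun e => P@_(mon e)].
have p_neq0 : exists e, p e != 0.
  move: P_neq0; rewrite -msupp_eq0; case supp: (msupp P) => [|m s] // _.
  have [|e mon_e] := mon_surj m; first by rewrite supp mem_head.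
  by exists e; rewrite ffunE mon_e -mcoeff_msupp supp mem_head.
have := T0_indep x_inj x_valid p_neq0; congr (_ != 0).
pose F m := ratr P@_m * mmap1 (fun j => T0 (x j).1 (x j).2) m.
transitivity (\sum_(m <- map mon (index_enum {ffun 'I_n -> 'I_d})) F m).
  rewrite big_map; apply: eq_bigr => e _; rewrite /F ffunE /mmap1.
  by congr (_ * _); apply: eq_bigr => i _; rewrite mnmE.
rewrite -(big_rmcond _ _ (P := fun m => m \in msupp P)); last first.
  by move=> m m_supp; rewrite /F (memN_msupp_eq0 m_supp) rmorph0 mul0r.
rewrite -big_filter /eval /mmap; apply: perm_big; apply: uniq_perm.
- by rewrite filter_uniq // map_inj_uniq // index_enum_uniq.
- exact: msupp_uniq.
move=> m; rewrite mem_filter; case m_supp: (m \in msupp P) => //=.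
by have [e <-] := mon_surj m m_supp; rewrite map_f ?mem_index_enum.
Qed.

End AlgebraicIndependence.

Section GenericContraction.
Variables (G : template) (L : tV G -> seq (tE G * bool)).

(* [beta_entry] and [beta_mx] over any commutative ring, so that tensor
   entries may be polynomials. *)
Definition beta_entryR (R : comNzRingType) (Tn : seq nat -> seq nat -> R)
    (IT : {ffun tT G -> 'I_(capN G)}) (IS : {ffun tS G -> 'I_(capN G)}) : R :=
  \sum_(W : {ffun tE G -> 'I_(capN G)} |
          [forall e, (W e < tcap G e)%N] &&
          [forall h : tE G * bool,
             match tend G h.1 h.2 with
             | inl (inl u) => W h.1 == IS u
             | inl (inr u) => W h.1 == IT u
             | inr _ => true
             end])
    \prod_(v : tV G) Tn (valence L v) [seq val (W h.1) | h <- L v].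

Definition beta_mxR (R : comNzRingType) (Tn : seq nat -> seq nat -> R)
  : 'M[R]_(#|{ffun tT G -> 'I_(capN G)}|, #|{ffun tS G -> 'I_(capN G)}|) :=
  \matrix_(i, j) beta_entryR Tn (enum_val i) (enum_val j).

Lemma map_beta_mxR (R S : comNzRingType) (phi : {rmorphism R -> S})
    (Tn : seq nat -> seq nat -> R) :
  map_mx phi (beta_mxR Tn) = beta_mxR (fun B s => phi (Tn B s)).
Proof.
apply/matrixP => i j; rewrite !mxE rmorph_sum; apply: eq_bigr => W _.
exact: rmorph_prod.
Qed.

Definition entry_at v (W : {ffun tE G -> 'I_(capN G)}) : seq nat * seq nat :=
  (valence L v, [seq val (W h.1) | h <- L v]).

Lemma eq_beta_mxR (R : comNzRingType) (Tn1 Tn2 : seq nat -> seq nat -> R) :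
  (forall v (W : {ffun tE G -> 'I_(capN G)}), [forall e, (W e < tcap G e)%N] ->
     Tn1 (entry_at v W).1 (entry_at v W).2 = Tn2 (entry_at v W).1 (entry_at v W).2) ->
  beta_mxR Tn1 = beta_mxR Tn2.
Proof.
move=> eqT; apply/matrixP => i j; rewrite !mxE.
by apply: eq_bigr => W /andP[W_lt _]; apply: eq_bigr => v _; apply: eqT.
Qed.

Definition used_entries : seq (seq nat * seq nat) :=
  undup [seq entry_at p.1 p.2 | p <- enum [pred p : tV G * {ffun tE G -> 'I_(capN G)} |
                                             [forall e, (p.2 e < tcap G e)%N]]].

Lemma mem_used_entries v (W : {ffun tE G -> 'I_(capN G)}) :
  [forall e, (W e < tcap G e)%N] -> entry_at v W \in used_entries.
Proof.
move=> W_lt; rewrite mem_undup.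
by apply: (map_f (fun p => entry_at p.1 p.2) (x := (v, W))); rewrite mem_enum.
Qed.

Lemma used_entries_valid : valid_template G ->
  forall y, y \in used_entries -> valid_entry y.
Proof.
case=> cap_gt0 _ _ y; rewrite mem_undup => /mapP[[v W]]; rewrite mem_enum /= => W_lt ->.
rewrite /valid_entry /=; apply/andP; split.
  by rewrite /valence all_map; apply/allP => h _; apply: cap_gt0.
by rewrite /valence; elim: (L v) => //= h s ->; rewrite andbT (forallP W_lt).
Qed.

Local Notation N := (size used_entries).

Definition used_entry (j : 'I_N) := nth ([::], [::]) used_entries j.

Lemma used_entry_inj : injective used_entry.
Proof.
by move=> i j /eqP; rewrite nth_uniq ?undup_uniq // => /eqP /val_inj.
Qed.

Definition generic_tensor (B s : seq nat) : {mpoly rat[N]} :=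
  if insub (index (B, s) used_entries) is Some j then 'X_j else 0.

Lemma eval_generic_beta (C : numClosedFieldType) (Tn : seq nat -> seq nat -> C) :
  map_mx (mmap (@ratr C) (fun j => Tn (used_entry j).1 (used_entry j).2))
         (beta_mxR generic_tensor) = beta_mx L Tn.
Proof.
rewrite map_beta_mxR; apply: eq_beta_mxR => v W W_lt.
have used := @mem_used_entries v W W_lt.
rewrite /generic_tensor; case: insubP => [j _ idx_j|]; last by rewrite index_mem used.
by rewrite /= mmapX mmap1U /used_entry idx_j nth_index.
Qed.

End GenericContraction.

Lemma QMF_maximal (C : numClosedFieldType) (G : template)
    (L : tV G -> seq (tE G * bool)) (T : seq nat -> seq nat -> C) :
  (forall Tn : seq nat -> seq nat -> C, (\rank (beta_mx L Tn) <= \rank (beta_mx L T))%N) ->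
  \rank (beta_mx L T) = QMF C L.
Proof.
move=> T_max; rewrite /QMF; case: ex_maxnP => k k_attained k_max.
apply/eqP; rewrite eqn_leq; apply/andP; split.
  apply: k_max; rewrite /rank_attainedb.
  by case: excluded_middle_informative => // -[]; exists T.
move: k_attained; rewrite /rank_attainedb.
by case: excluded_middle_informative => // -[Tn rank_Tn] _; rewrite -rank_Tn.
Qed.

Theorem proposition4p5 (C : numClosedFieldType) (T0 : seq nat -> seq nat -> C) :
  alg_indep_entries T0 ->
  forall (G : template) (L : tV G -> seq (tE G * bool)),
    valid_template G -> local_ordering L ->
    \rank (beta_mx L T0) = QMF C L.
Proof.
(* The argument does not need the local ordering to be well formed. *)
move=> T0_indep G L G_valid _; apply: QMF_maximal => Tn.
rewrite -(eval_generic_beta L Tn) -(eval_generic_beta L T0).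
apply: mxrank_map_le => P /alg_indep_eval_eq0 -> //; first exact: rmorph0.
- exact: used_entry_inj.
- by move=> j; apply: (@used_entries_valid G L G_valid); exact: (mem_nth _ (ltn_ord j)).
Qed.
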